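(* Let $q$ be an odd prime power and use the setting of the context. Then $\mathcal C=\pi^G$ is a $(6,(q^3-1)(q^2+q+1),4;3)_q$ constant-dimension subspace code; that is, $\mathcal C$ consists of exactly $(q^3-1)(q^2+q+1)$ planes of $\Sigma\cong{\rm PG}(5,q)$ and any two distinct planes of $\mathcal C$ meet in at most one point.
   Context: Let $\Sigma$ be the set of points $\langle(a,b,a^q,b^q,a^{q^2},b^{q^2})\rangle$ of ${\rm PG}(5,q^3)$, $a,b\in{\rm GF}(q^3)$, $(a,b)\ne(0,0)$; since these vectors form a $6$-dimensional ${\rm GF}(q)$-vector space, $\Sigma$ is a model of ${\rm PG}(5,q)$ whose planes correspond to its $3$-dimensional ${\rm GF}(q)$-subspaces. Points are column vectors. For $\eta\in{\rm GF}(q^3)\setminus\{0\}$ let $g_\eta$ be the projectivity with matrix ${\rm diag}(\eta^2,\eta^{q+1},\eta^{2q},\eta^{q^2+q},\eta^{2q^2},\eta^{q^2+1})$, and for $w\in{\rm GF}(q^3)\setminus\{0\}$ let $h_w$ be the projectivity with matrix ${\rm diag}(1,w,1,w^q,1,w^{q^2})$. Let $S=\{g_\eta\}$ (order $q^2+q+1$), $W=\{h_w\}$ (order $q^3-1$), and $G=S\times W$, of order $(q^3-1)(q^2+q+1)$. Let $\pi$ be the plane of $\Sigma$ consisting of the points $\langle(a,\frac{a+a^q}{2},a^q,\frac{a^q+a^{q^2}}{2},a^{q^2},\frac{a^{q^2}+a}{2})\rangle$, $a\in{\rm GF}(q^3)\setminus\{0\}$, and $\mathcal C=\pi^G=\{\pi^g:g\in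 G\}$. An $(n,M,4;3)_q$ constant-dimension code is a set of $M$ planes of ${\rm PG}(n-1,q)$ pairwise meeting in at most a point. *)

From HB Require Import structures.
From mathcomp Require Import all_boot all_order all_algebra all_fingroup all_field.
Set Implicit Arguments. Unset Strict Implicit. Unset Printing Implicit Defensive.
Import GRing.Theory.
Local Open Scope ring_scope.

Section Sigma.
Variables (F : finFieldType) (q : nat).

Definition sigma_vec (a b : F) : 'cV[F]_6 :=
  \col_(i < 6) nth 0 [:: a; b; a ^+ q; b ^+ q; a ^+ (q ^ 2); b ^+ (q ^ 2)] i.

Definition nonzeroF : {set F} := [set x : F | x != 0].

Definition pi_vecs : {set 'cV[F]_6} :=
  [set sigma_vec a ((a + a ^+ q) / 2%:R) | a in nonzeroF].

Definition g_mx (eta : F) : 'M[F]_6 :=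
  diag_mx (\row_(i < 6) nth 0 [:: eta ^+ 2; eta ^+ (q + 1); eta ^+ (2 * q);
                                eta ^+ (q ^ 2 + q); eta ^+ (2 * q ^ 2);
                                eta ^+ (q ^ 2 + 1)] i).

Definition h_mx (w : F) : 'M[F]_6 :=
  diag_mx (\row_(i < 6) nth 0 [:: 1; w; 1; w ^+ q; 1; w ^+ (q ^ 2)] i).

Definition G_mx : {set 'M[F]_6} :=
  [set g_mx eta *m h_mx w | eta in nonzeroF, w in nonzeroF].

(* The projective point <x> of PG(5,q^3), represented canonically by the
   (canonical generator matrix of the) row space spanned by x^T. *)
Definition proj_pt (x : 'cV[F]_6) : 'M[F]_6 := (<< x^T >>)%MS.

Definition pts (X : {set 'cV[F]_6}) : {set 'M[F]_6} := [set proj_pt x | x in X].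

(* The code C = pi^G, as a set of planes (each plane = its set of points). *)
Definition code_C : {set {set 'M[F]_6}} :=
  [set pts [set M *m x | x in pi_vecs] | M in G_mx].

End Sigma.

From HB Require Import structures.
From mathcomp Require Import all_boot all_order all_algebra all_fingroup all_field.
From mathcomp Require Import cyclic zify ring.
Set Implicit Arguments. Unset Strict Implicit. Unset Printing Implicit Defensive.
Import GRing.Theory.
Local Open Scope ring_scope.

(* The image of pi under g_eta h_w is the plane of points
   <sigma(al a, be (a + a^q)/2)>, a <> 0, with al = eta^2 and be = eta^(q+1) w.
   Two points <sigma(x, y)> and <sigma(x', y')> coincide iff (x', y') is a
   GF(q)-multiple of (x, y), so each common point of the planes (al, be) and
   (al', be') yields a relation C a = D a^q with C, D independent of a; two
   distinct common points force C = D = 0, i.e. al/al' lies in GF(q) and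
   be = (al/al') be', which makes the planes equal.  Applied to the points
   a = 1 and a = t outside GF(q), the same argument shows that (eta, w) and
   (eta', w') give the same plane iff w = w' and eta/eta' lies in GF(q)^*; here
   q odd is what lets (eta/eta')^2 in GF(q) imply eta/eta' in GF(q).  So each
   plane of C comes from exactly q - 1 of the (q^3 - 1)^2 pairs (eta, w). *)
Section FinFieldUnityRoots.
Variable F : finFieldType.

Lemma finField_prim_root : exists z : F, #|F|.-1.-primitive_root z.
Proof.
have F_gt1 := finNzRing_gt1 F.
have : has #|F|.-1.-primitive_root (enum [set~ (0 : F)]).
  apply: has_prim_root; rewrite ?enum_uniq -?cardE ?cardsC1 //.
    by rewrite ltn_predRL.
  apply/allP=> x; rewrite mem_enum !inE => x0; rewrite unity_rootE; apply/eqP.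
  by apply: (mulIf x0); rewrite mul1r -exprSr (ltn_predK F_gt1) expf_card.
by case/hasP=> z _; exists z.
Qed.

Lemma card_unity_roots n : (n %| #|F|.-1)%N -> #|[set x : F | x ^+ n == 1]| = n.
Proof.
move=> n_dvd; have [z prim_z] := finField_prim_root.
have prim_w := dvdn_prim_root prim_z n_dvd; set w := z ^+ _ in prim_w.
have -> : [set x : F | x ^+ n == 1] = [set w ^+ i | i : 'I_n].
  apply/setP=> x; rewrite inE; apply/eqP/imsetP => [/(prim_rootP prim_w)[i ->]|].
    by exists i.
  by case=> i _ ->; rewrite exprAC (prim_expr_order prim_w) expr1n.
rewrite card_imset ?card_ord // => i j /eqP.
by rewrite (eq_prim_root_expr prim_w) !modn_small // => /eqP/val_inj.
Qed.

End FinFieldUnityRoots.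

Lemma card_uniform_fibers (T T' : finType) (f : T -> T') (A : {set T}) k :
  (forall x, x \in A -> #|[set y in A | f y == f x]| = k) ->
  #|A| = (#|f @: A| * k)%N.
Proof.
move=> fiberA; rewrite -sum1_card (partition_big_imset f) /= -sum_nat_const.
apply: eq_bigr => _ /imsetP[x xA ->]; rewrite sum1dep_card -(fiberA x xA).
by apply: eq_card => y; rewrite !inE.
Qed.

Section PlanesOfC.
Variables (F : finFieldType) (q : nat).
Hypothesis cardF : #|F| = (q ^ 3)%N.
Hypothesis q_gt1 : (1 < q)%N.
Hypothesis q_odd : odd q.
Hypothesis two_neq0 : (2%:R : F) != 0.

Local Notation sv := (sigma_vec q).

Lemma expf_q3 (x : F) : x ^+ (q ^ 3) = x.
Proof. by rewrite -cardF expf_card. Qed.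

Lemma card_nonzeroF : #|nonzeroF F| = (q ^ 3 - 1)%N.
Proof.
rewrite -cardF subn1 -(cardsC1 (0 : F)); apply: eq_card => x.
by rewrite !inE.
Qed.

Definition GFq_units : {set F} := [set x : F | x ^+ (q - 1) == 1].

Lemma GFq_unitsE d : (d \in GFq_units) = (d != 0) && (d ^+ q == d).
Proof.
have dq : d ^+ q = d ^+ (q - 1) * d by rewrite -exprSr subn1 prednK // ltnW.
rewrite inE dq; have [-> | d0] := eqVneq d 0.
  by rewrite expr0n subn_eq0 leqNgt q_gt1 eq_sym oner_eq0.
apply/eqP/eqP => [-> | ed]; first by rewrite mul1r.
by apply: (mulIf d0); rewrite mul1r.
Qed.

Lemma card_GFq_units : #|GFq_units| = (q - 1)%N.
Proof.
apply: card_unity_roots; rewrite cardF.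
by apply/dvdnP; exists (q ^ 2 + q + 1)%N; nia.
Qed.

Lemma exists_nonfixed : exists2 t : F, t != 0 & t ^+ q != t.
Proof.
have : ~~ (nonzeroF F \subset GFq_units).
  apply/negP => /subset_leq_card; rewrite card_nonzeroF card_GFq_units.
  by apply/negP; rewrite -ltnNge; nia.
case/subsetPn => t; rewrite inE GFq_unitsE => t0; rewrite t0 => tq.
by exists t.
Qed.

Lemma fixed_sqr (d : F) : d != 0 -> (d ^+ 2) ^+ q = d ^+ 2 -> d ^+ q = d.
Proof.
move=> d0 d2q; set e := d ^+ (q - 1).
have dq : d ^+ q = e * d by rewrite -exprSr subn1 prednK // ltnW.
have /eqP : e ^+ 2 = 1.
  by apply: (mulIf (expf_neq0 2 d0)); rewrite mul1r -exprMn -dq exprAC d2q.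
rewrite sqrf_eq1 => /orP[/eqP e1 | /eqP e_m1]; first by rewrite dq e1 mul1r.
have odd_m : odd (q ^ 2 + q + 1) by rewrite !oddD oddX q_odd.
have dN : d = - d.
  have q3E : (q ^ 3 = (q - 1) * (q ^ 2 + q + 1) + 1)%N by nia.
  by rewrite -{1}(expf_q3 d) q3E exprD exprM -/e e_m1 -signr_odd odd_m mulN1r.
have : d * 2%:R == 0 by rewrite mulr_natr mulr2n {1}dN addNr.
by rewrite mulf_eq0 (negPf d0) (negPf two_neq0).
Qed.

Lemma sigma_vecZ (c a b : F) : c ^+ q = c -> c *: sv a b = sv (c * a) (c * b).
Proof.
move=> cq; have cq2 : c ^+ (q ^ 2) = c by rewrite expnS expn1 exprM cq cq.
apply/matrixP => i j; rewrite !mxE.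
by case: i => [[|[|[|[|[|[|i]]]]]] _] //=; rewrite exprMn ?cq ?cq2.
Qed.

Lemma proj_ptZ (c : F) (u : 'cV[F]_6) : c != 0 -> proj_pt (c *: u) = proj_pt u.
Proof. by move=> c0; apply: eq_genmx; rewrite linearZ /=; apply: eqmx_scale. Qed.

Lemma proj_pt_sigma_vecP (x y x' y' : F) : x != 0 ->
  proj_pt (sv x y) = proj_pt (sv x' y') ->
  exists c, [/\ c ^+ q = c, x' = c * x & y' = c * y].
Proof.
move=> x0 /genmxP/andP[_ /sub_rVP[c svc]].
have coord i : sv x' y' i 0 = c * sv x y i 0.
  by have := congr1 (fun M : 'M_(1, 6) => M 0 i) svc; rewrite !mxE.
have := coord (inord 0); have := coord (inord 1); have := coord (inord 2).
rewrite !mxE !inordK //= => x'q y'E x'E; exists c; split => //.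
by apply: (mulIf (expf_neq0 q x0)); rewrite -x'q x'E exprMn.
Qed.

Definition mean_frob (a : F) := (a + a ^+ q) / 2%:R.

Lemma mean_frobZ (c a : F) : c ^+ q = c -> mean_frob (c * a) = c * mean_frob a.
Proof. by move=> cq; rewrite /mean_frob exprMn cq -mulrDr mulrA. Qed.

Definition plane_pt (al be a : F) := proj_pt (sv (al * a) (be * mean_frob a)).

Definition plane (al be : F) : {set 'M[F]_6} :=
  [set plane_pt al be a | a in nonzeroF F].

Lemma plane_ptZ (al be c a : F) : c != 0 -> c ^+ q = c ->
  plane_pt al be (c * a) = plane_pt al be a.
Proof.
move=> c0 cq; rewrite /plane_pt mean_frobZ // -[RHS](proj_ptZ _ c0) sigma_vecZ //.
by rewrite [al * _]mulrCA [be * _]mulrCA.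
Qed.

Lemma planeZ (c al be : F) : c != 0 -> c ^+ q = c -> plane (c * al) (c * be) = plane al be.
Proof.
move=> c0 cq; apply/setP => X; apply/imsetP/imsetP => -[a]; rewrite !inE => a0 ->.
- exists (c * a); first by rewrite inE mulf_neq0.
  by rewrite /plane_pt mean_frobZ // !mulrA [al * c]mulrC [be * c]mulrC.
- have ci0 : c^-1 != 0 by rewrite invr_eq0.
  exists (c^-1 * a); first by rewrite inE mulf_neq0.
  rewrite /plane_pt mean_frobZ ?exprVn ?cq //.
  by congr (proj_pt (sv _ _)); field.
Qed.

Lemma plane_pt_in_plane (al be al' be' a : F) : al' != 0 ->
  plane_pt al be a \in plane al' be' ->
  be * (a + a ^+ q) = be' * (al / al' * a + (al / al' * a) ^+ q).
Proof.
move=> al'0 /imsetP[a']; rewrite inE => a'0 /esym/proj_pt_sigma_vecP.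
case=> [|c [cq alE beE]]; first by rewrite mulf_neq0.
have -> : al / al' * a = c * a' by rewrite mulrAC alE; field.
have -> : be * (a + a ^+ q) = 2%:R * (be * mean_frob a) by rewrite /mean_frob; field.
by rewrite beE exprMn cq /mean_frob; field.
Qed.

Lemma plane_common_points (al be al' be' a1 a2 : F) :
  al' != 0 -> be' != 0 -> a1 != 0 -> a2 != 0 ->
  plane_pt al be a1 \in plane al' be' -> plane_pt al be a2 \in plane al' be' ->
  plane_pt al be a1 != plane_pt al be a2 ->
  (al / al') ^+ q = al / al' /\ be = al / al' * be'.
Proof.
move=> al'0 be'0 a10 a20 /(plane_pt_in_plane al'0) E1 /(plane_pt_in_plane al'0) E2.
set g := al / al' in E1 E2 *; set C := g * be' - be; set D := be - g ^+ q * be'.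
have CD a : be * (a + a ^+ q) = be' * (g * a + (g * a) ^+ q) -> C * a = D * a ^+ q.
  move=> Ea; apply/eqP; rewrite -subr_eq0; apply/eqP.
  transitivity (be' * (g * a + (g * a) ^+ q) - be * (a + a ^+ q)).
    by rewrite /C /D [(g * a) ^+ q]exprMn; ring.
  by rewrite Ea subrr.
move: {E1 E2}(CD _ E1) (CD _ E2) => E1 E2 pts_neq.
suff [C0 D0] : C = 0 /\ D = 0.
  have beE : be = g * be' by apply/esym/subr0_eq.
  split=> //; apply: (mulIf be'0); rewrite -beE; exact/esym/subr0_eq.
have [C0|C0] := eqVneq C 0; have [D0|D0] := eqVneq D 0 => //.
- by move/esym/eqP: E1; rewrite C0 mul0r mulf_eq0 (negPf D0) expf_eq0 (negPf a10) andbF.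
- by move/eqP: E1; rewrite D0 mul0r mulf_eq0 (negPf C0) (negPf a10).
have aq a : C * a = D * a ^+ q -> a ^+ q = C / D * a by move=> Ea; rewrite mulrAC Ea; field.
have mu0 : a1 / a2 != 0 by rewrite mulf_neq0 ?invr_eq0.
have muq : (a1 / a2) ^+ q = a1 / a2.
  by rewrite exprMn exprVn (aq _ E1) (aq _ E2); field; rewrite C0 D0 a20.
by case/eqP: pts_neq; rewrite -{1}(divfK a20 a1) plane_ptZ.
Qed.

Lemma plane_meet (al be al' be' : F) : al != 0 -> al' != 0 -> be' != 0 ->
  plane al be != plane al' be' -> (#|plane al be :&: plane al' be'| <= 1)%N.
Proof.
move=> al0 al'0 be'0 neq_planes; rewrite leqNgt; apply/negP.
case/card_gt1P=> _ [_ [/setIP[/imsetP[a1 a10 ->] P1] /setIP[/imsetP[a2 a20 ->] P2] pts_neq]].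
rewrite !inE in a10 a20.
have [gq beE] := plane_common_points al'0 be'0 a10 a20 P1 P2 pts_neq.
case/eqP: neq_planes; rewrite -{1}(divfK al'0 al) beE planeZ //.
by rewrite mulf_neq0 ?invr_eq0.
Qed.

Lemma G_mx_sigma_vec (eta w a b : F) :
  (g_mx q eta *m h_mx q w) *m sv a b = sv (eta ^+ 2 * a) (eta ^+ (q + 1) * w * b).
Proof.
rewrite -mulmxA /h_mx /g_mx !mul_diag_mx; apply/matrixP => i j; rewrite !mxE.
case: i => [[|[|[|[|[|[|i]]]]]] _] //=; rewrite ?mul1r ?mulrA ?exprMn -?exprM //.
- by rewrite -exprD; congr (_ ^+ _ * _); lia.
- by congr (_ ^+ _ * _ * _); lia.
- by rewrite -exprD; congr (_ ^+ _ * _); lia.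
- have -> : ((q + 1) * q ^ 2 = q ^ 3 + q ^ 2)%N by lia.
  by rewrite [in RHS]exprD expf_q3 addn1 exprS.
Qed.

Definition plane_of (u : F * F) := plane (u.1 ^+ 2) (u.1 ^+ (q + 1) * u.2).

Lemma code_CE : code_C F q = plane_of @: setX (nonzeroF F) (nonzeroF F).
Proof.
have pts_G_pi eta w :
    pts [set (g_mx q eta *m h_mx q w) *m x | x in pi_vecs F q] = plane_of (eta, w).
  rewrite /pts /pi_vecs /plane -!imset_comp; apply: eq_imset => a /=.
  by rewrite G_mx_sigma_vec.
apply/setP => X; apply/imsetP/imsetP => [[M /imset2P[eta w eta0 w0 ->] ->] | ].
  by exists (eta, w); rewrite ?pts_G_pi //; apply/setXP.
case=> -[eta w] /setXP[eta0 w0] ->; exists (g_mx q eta *m h_mx q w); last by rewrite pts_G_pi.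
by apply/imset2P; exists eta w.
Qed.

Lemma plane_pt1_neq (al be t : F) : al != 0 -> t ^+ q != t ->
  plane_pt al be 1 != plane_pt al be t.
Proof.
move=> al0 tq; apply/eqP=> /proj_pt_sigma_vecP[|c [cq + _]]; first by rewrite mulr1.
by rewrite mulr1 mulrC => /(mulIf al0) tE; rewrite tE cq eqxx in tq.
Qed.

Lemma plane_ofZ (d eta w : F) : d \in GFq_units -> plane_of (d * eta, w) = plane_of (eta, w).
Proof.
rewrite GFq_unitsE => /andP[d0 /eqP dq].
have d2q : (d ^+ 2) ^+ q = d ^+ 2 by rewrite exprAC dq.
rewrite /plane_of /= -[RHS](planeZ _ _ (expf_neq0 2 d0) d2q) exprMn; congr plane.
by rewrite exprMn exprD dq expr1 -expr2 mulrA.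
Qed.

Lemma plane_of_eq (eta w eta' w' : F) : eta != 0 -> eta' != 0 -> w' != 0 ->
  plane_of (eta, w) = plane_of (eta', w') -> eta / eta' \in GFq_units /\ w = w'.
Proof.
move=> eta0 eta'0 w'0 planesE; have [t t0 tq] := exists_nonfixed.
have pt_in a : a != 0 -> plane_pt (eta ^+ 2) (eta ^+ (q + 1) * w) a \in plane_of (eta', w').
  by move=> a0; rewrite -planesE; apply/imsetP; exists a; rewrite ?inE.
have [gq beE] := plane_common_points (expf_neq0 2 eta'0) (mulf_neq0 (expf_neq0 _ eta'0) w'0)
  (oner_neq0 F) t0 (pt_in _ (oner_neq0 F)) (pt_in _ t0) (plane_pt1_neq _ (expf_neq0 2 eta0) tq).
set d := eta / eta'; have d0 : d != 0 by rewrite mulf_neq0 ?invr_eq0.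
have dq : d ^+ q = d by apply: (fixed_sqr d0); rewrite /d expr_div_n; exact: gq.
rewrite GFq_unitsE d0 dq eqxx; split=> //.
apply: (mulfI (mulf_neq0 (expf_neq0 2 d0) (expf_neq0 (q + 1) eta'0))).
have etaE : eta = d * eta' by rewrite divfK.
move: beE; rewrite -expr_div_n -/d etaE exprMn exprD dq.
by rewrite expr1 -expr2 -!mulrA => ->.
Qed.

Lemma card_plane_of_fiber u : u \in setX (nonzeroF F) (nonzeroF F) ->
  #|[set v in setX (nonzeroF F) (nonzeroF F) | plane_of v == plane_of u]| = (q - 1)%N.
Proof.
case: u => eta w; rewrite !inE /= => /andP[eta0 w0].
have -> : [set v in setX (nonzeroF F) (nonzeroF F) | plane_of v == plane_of (eta, w)] =
          [set (d * eta, w) | d in GFq_units].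
  apply/setP => -[eta' w']; rewrite !inE /=; apply/idP/imsetP.
    case/andP=> /andP[eta'0 w'0] /eqP/plane_of_eq[] // dU <-.
    by exists (eta' / eta); rewrite ?divfK.
  case=> d dU [-> ->]; rewrite plane_ofZ // eqxx w0 andbT mulf_neq0 //.
  by move: dU; rewrite GFq_unitsE => /andP[].
by rewrite card_imset ?card_GFq_units // => d d' [/(mulIf eta0)].
Qed.

Lemma card_code_C : #|code_C F q| = ((q ^ 3 - 1) * (q ^ 2 + q + 1))%N.
Proof.
have := card_uniform_fibers card_plane_of_fiber.
rewrite -code_CE cardsX card_nonzeroF => cardE.
have q1_gt0 : (0 < q - 1)%N by rewrite subn_gt0.
apply/eqP; rewrite -(eqn_pmul2r q1_gt0) -cardE; apply/eqP; nia.
Qed.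

Lemma code_C_meet (P P' : {set 'M[F]_6}) : P \in code_C F q -> P' \in code_C F q ->
  P != P' -> (#|P :&: P'| <= 1)%N.
Proof.
rewrite code_CE => /imsetP[[eta w] /setXP[]]; rewrite !inE => eta0 _ ->.
case/imsetP=> -[eta' w'] /setXP[]; rewrite !inE => eta'0 w'0 ->.
by apply: plane_meet; rewrite ?mulf_neq0 ?expf_neq0.
Qed.

End PlanesOfC.

Theorem theorem4p2 (q : nat)
  (Hq_pp : exists2 p : nat, prime p & exists2 k : nat, (0 < k)%N & q = (p ^ k)%N)
  (Hq_odd : odd q)
  (F : finFieldType) (HF : #|F| = (q ^ 3)%N) :
  #|code_C F q| = ((q ^ 3 - 1) * (q ^ 2 + q + 1))%N /\
  (forall P P' : {set 'M[F]_6},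
     P \in code_C F q -> P' \in code_C F q -> P != P' ->
     (#|P :&: P'| <= 1)%N).
Proof.
case: Hq_pp => p p_pr [k k_gt0 qE].
have q_gt1 : (1 < q)%N by rewrite qE -(expn0 p) ltn_exp2l ?prime_gt1.
have pF : p \in [pchar F] by apply: (card_finPcharP (n := k * 3)); rewrite // HF qE expnM.
have two_neq0 : (2%:R : F) != 0.
  rewrite -(dvdn_pcharf pF) dvdn_prime2 //; apply: contraTneq Hq_odd => p2.
  by rewrite qE p2 oddX orbF -lt0n.
by split; [apply: card_code_C | apply: code_C_meet].
Qed.
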